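(* Let $X$ be a digraph and $S\subset V(X)$ such that no arc with exactly one end in $S$ lies in a digon. Then $X$ and the local reversal of $X$ at $S$ have the same $H$-spectrum.
   Context: A digraph $X$ has a finite vertex set and an arc set of ordered pairs of distinct vertices; $\{x,y\}$ is a digon if both $xy,yx$ are arcs. $H(X)$ has $(u,v)$-entry $1$ if $uv$ and $vu$ are arcs, $i$ if only $uv$ is an arc, $-i$ if only $vu$ is an arc, and $0$ otherwise; two digraphs have the same $H$-spectrum if their Hermitian adjacency matrices have the same characteristic polynomial. The local reversal of $X$ at $S$ is the digraph obtained by replacing every arc $xy$ with exactly one end in $S$ by its converse $yx$ (arcs with both or no ends in $S$ are unchanged). *)

From HB Require Import structures.
From mathcomp Require Import all_boot all_order all_algebra all_field.
Set Implicit Arguments. Unset Strict Implicit. Unset Printing Implicit Defensive.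
Import GRing.Theory Num.Theory.
Local Open Scope ring_scope.

(* A digraph on the vertex set 'I_n is an arc relation [arc : rel 'I_n];
   arcs join distinct vertices, i.e. [arc] is irreflexive (a hypothesis). *)
Definition digraph_loopless (n : nat) (arc : rel 'I_n) : Prop :=
  forall x, ~~ arc x x.

Definition hermAdj (n : nat) (arc : rel 'I_n) : 'M[algC]_n :=
  \matrix_(u, v)
    (if arc u v && arc v u then 1
     else if arc u v then 'i
     else if arc v u then - 'i
     else 0).

Definition local_reversal (n : nat) (arc : rel 'I_n) (S : {set 'I_n}) : rel 'I_n :=
  fun x y => if (x \in S) != (y \in S) then arc y x else arc x y.

Definition same_H_spectrum (n : nat) (a1 a2 : rel 'I_n) : Prop :=
  char_poly (hermAdj a1) = char_poly (hermAdj a2).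

From HB Require Import structures.
From mathcomp Require Import all_boot all_order all_algebra all_field.
Import GRing.Theory Num.Theory.
Local Open Scope ring_scope.

(* Conjugating H by the diagonal signature matrix of S negates exactly the
   entries on arcs with one end in S.  Such an arc is not in a digon, so its
   entry is +-i, and reversing it flips the sign as well; hence the local
   reversal has H-matrix D H D with D^2 = 1, a similar matrix. *)

Lemma char_poly_conj (R : comNzRingType) (n : nat) (P Q A : 'M[R]_n) :
  P *m Q = 1%:M -> char_poly (P *m A *m Q) = char_poly A.
Proof.
move=> PQ1.
have PQ1_poly : map_mx polyC P *m map_mx polyC Q = 1%:M.
  by rewrite -map_mxM PQ1 map_scalar_mx.
rewrite /char_poly.
have -> : char_poly_mx (P *m A *m Q) =
          map_mx polyC P *m char_poly_mx A *m map_mx polyC Q.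
  rewrite /char_poly_mx mulmxBr mulmxBl -!map_mxM.
  by rewrite mul_mx_scalar -scalemxAl PQ1_poly scalemx1.
by rewrite !det_mulmx mulrAC -det_mulmx PQ1_poly det1 mul1r.
Qed.

Section SignatureMatrix.

Context {R : pzRingType} {n : nat} (S : {set 'I_n}).

Definition sign_mx : 'M[R]_n := diag_mx (\row_i (-1) ^+ (i \in S)).

Lemma sign_mxK : sign_mx *m sign_mx = 1%:M.
Proof.
apply/matrixP => i j; rewrite mulmx_diag !mxE -expr2 -exprM mulnC exprM.
by rewrite sqrrN expr1n expr1n.
Qed.

Lemma sign_conj_mxE (A : 'M[R]_n) i j :
  (sign_mx *m A *m sign_mx) i j =
  if (i \in S) != (j \in S) then - A i j else A i j.
Proof.
rewrite mul_mx_diag mul_diag_mx !mxE.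
by case: (i \in S); case: (j \in S);
  rewrite /= ?expr0 ?expr1 ?mulN1r ?mulrN1 ?mul1r ?mulr1 ?opprK.
Qed.

End SignatureMatrix.

Lemma hermAdj_local_reversalE (n : nat) (arc : rel 'I_n) (S : {set 'I_n}) i j :
  (forall x y, arc x y -> (x \in S) != (y \in S) -> ~~ arc y x) ->
  hermAdj (local_reversal arc S) i j =
  if (i \in S) != (j \in S) then - hermAdj arc i j else hermAdj arc i j.
Proof.
move=> no_digon; rewrite !mxE /local_reversal [(j \in S) == _]eq_sym.
case cross: ((i \in S) != (j \in S)) => //.
case Aij: (arc i j); case Aji: (arc j i) => //=; rewrite ?opprK ?oppr0 //.
by move: (no_digon i j Aij cross); rewrite Aji.
Qed.

Theorem proposition8p2 (n : nat) (arc : rel 'I_n) (S : {set 'I_n}) :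
  digraph_loopless arc ->
  (forall x y, arc x y -> (x \in S) != (y \in S) -> ~~ arc y x) ->
  same_H_spectrum arc (local_reversal arc S).
Proof.
move=> _ no_digon; rewrite /same_H_spectrum.
have -> : hermAdj (local_reversal arc S) =
          sign_mx S *m hermAdj arc *m sign_mx S.
  by apply/matrixP => i j; rewrite sign_conj_mxE hermAdj_local_reversalE.
by rewrite char_poly_conj // sign_mxK.
Qed.
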